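(* Define functions $b_1,b_2,b_3$ on $\mathbb{R}$ by $b_1(s)=e^{1/s}$ for $s<0$, $b_1(s)=e^{-1/(s-2)}$ for $s>2$, $b_1(s)=0$ otherwise; $b_2(s)=e^{-1/(s(1-s))}$ for $0<s<1$, $b_2(s)=0$ otherwise; $b_3(s)=e^{-1/((s-1)(2-s))}$ for $1<s<2$, $b_3(s)=0$ otherwise. Let $\gamma$ be a curve in $\mathbb{E}^4$ with a Bishop frame $\mathbb{B}$ whose coefficient matrix is $\begin{pmatrix}0&b_1&b_2&b_3\\-b_1&0&0&0\\-b_2&0&0&0\\-b_3&0&0&0\end{pmatrix}$. Then $\gamma$ is a regular curve which does not admit a generalized Bishop frame of type C.
   Context: A regular curve $\gamma: I\to\mathbb{E}^4$ ($I$ an open interval) is considered with arc-length parametrization; $\mathbb{T}=\gamma'$ is its unit tangent vector. A frame on $\gamma$ is an ordered orthonormal frame $(\mathbb{T},\mathbb{Z}_1,\mathbb{Z}_2,\mathbb{Z}_3)$ of smooth vector fields along $\gamma$ whose first vector is $\mathbb{T}$; it is identified with the smooth map $\mathbb{Z}: I\to O(4)$ whose rows are these vectors. Its coefficient matrix is the $\mathfrak{o}(4)$-valued function $X$ with $\mathbb{Z}'=X\mathbb{Z}$. A Bishop frame is a frame whose coefficient matrix has the form given in the claim (with some functions in place of $b_1,b_2,b_3$). A frame is of type C if, after possibly permuting $\mathbb{Z}_1,\mathbb{Z}_2,\mathbb{Z}_3$ (keeping $\mathbb{T}$ first), its coefficient matrix has the form $\begin{pmatrix}0&x_1&x_2&0\\-x_1&0&0&x_3\\-x_2&0&0&0\\0&-x_3&0&0\end{pmatrix}$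 for some smooth functions $x_1,x_2,x_3$. *)

From HB Require Import structures.
From mathcomp Require Import all_boot all_order all_algebra all_fingroup.
From mathcomp Require Import all_classical all_reals all_analysis.
Set Implicit Arguments. Unset Strict Implicit. Unset Printing Implicit Defensive.
Import Order.TTheory GRing.Theory Num.Theory.
Import numFieldNormedType.Exports.
Local Open Scope ring_scope.

Section Defs.
Variable R : realType.

Definition smooth (f : R -> R) : Prop :=
  forall (n : nat) (x : R), derivable (iter n (@derive1 R R) f) x 1.

Definition b1 (s : R) : R :=
  if s < 0 then expR (1 / s) else if 2 < s then expR (- 1 / (s - 2)) else 0.
Definition b2 (s : R) : R :=
  if (0 < s) && (s < 1) then expR (- 1 / (s * (1 - s))) else 0.
Definition b3 (s : R) : R :=
  if (1 < s) && (s < 2) then expR (- 1 / ((s - 1) * (2 - s))) else 0.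

(* Bishop-form coefficient matrix (rows/cols indexed T, Z1, Z2, Z3) *)
Definition bishop_mx (a b c : R) : 'M[R]_4 :=
  \matrix_(i < 4, j < 4)
    match nat_of_ord i, nat_of_ord j with
    | 0, 1 => a | 0, 2 => b | 0, 3 => c
    | 1, 0 => - a | 2, 0 => - b | 3, 0 => - c
    | _, _ => 0 end.

Definition typeC_mx (x1 x2 x3 : R) : 'M[R]_4 :=
  \matrix_(i < 4, j < 4)
    match nat_of_ord i, nat_of_ord j with
    | 0, 1 => x1 | 0, 2 => x2 | 1, 3 => x3
    | 1, 0 => - x1 | 2, 0 => - x2 | 3, 1 => - x3
    | _, _ => 0 end.

Definition smooth_curve (gamma : R -> 'rV[R]_4) : Prop :=
  forall j : 'I_4, smooth (fun t => gamma t ord0 j).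

Definition regular_curve (gamma : R -> 'rV[R]_4) : Prop :=
  smooth_curve gamma /\
  forall t, exists j : 'I_4, derive1 (fun s => gamma s ord0 j) t != 0.

(* Z is a frame on gamma: rows (T, Z1, Z2, Z3) smooth, orthonormal (Z t in O(4)),
   and the first row is the unit tangent gamma' (arc-length parametrization). *)
Definition is_frame (gamma : R -> 'rV[R]_4) (Z : R -> 'M[R]_4) : Prop :=
  (forall i j : 'I_4, smooth (fun t => Z t i j)) /\
  (forall t, Z t *m (Z t)^T = 1%:M) /\
  (forall (t : R) (j : 'I_4), is_derive t (1:R) (fun s => gamma s ord0 j) (Z t ord0 j)).

Definition coeff_matrix (Z X : R -> 'M[R]_4) : Prop :=
  forall (t : R) (i j : 'I_4), is_derive t (1:R) (fun s => Z s i j) ((X t *m Z t) i j).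

Definition permute_frame (s : 'S_4) (Z : R -> 'M[R]_4) : R -> 'M[R]_4 :=
  fun t => \matrix_(i < 4, j < 4) Z t (s i) j.

(* frame of type C: after permuting Z1,Z2,Z3 (T stays first) the coefficient
   matrix has the type C form for some smooth x1, x2, x3 *)
Definition type_C (Z : R -> 'M[R]_4) : Prop :=
  exists s : 'S_4, s ord0 = ord0 /\
  exists x1 x2 x3 : R -> R, [/\ smooth x1, smooth x2, smooth x3 &
    coeff_matrix (permute_frame s Z) (fun t => typeC_mx (x1 t) (x2 t) (x3 t))].

End Defs.

(* Let P = Y B^T be the matrix of inner products between a type C frame Y and
   the Bishop frame B.  It is orthogonal, has its first row and column equal to
   those of the identity (both frames start with T), and satisfies
   P' = X_C P + P X_B^T.  Since Z2' = -x2 T in a type C frame, the entries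
   <Z2, B_k> (k = 1, 2, 3) are constant.  Since Z3' = -x3 Z1, Z3 is orthogonal
   to T' = b1 B1 + b2 B2 + b3 B3; on an interval where a single b_k is nonzero
   this gives <Z3, B_k> = 0, and by continuity also at its endpoints.  Hence at
   t = 0, 1, 2 the unit vector Z3 is +-B3, +-B1, +-B2 respectively, so that
   <Z2, B3>, <Z2, B1>, <Z2, B2> all vanish: the unit vector Z2 would be 0. *)

From HB Require Import structures.
From mathcomp Require Import all_boot all_order all_algebra all_fingroup.
From mathcomp Require Import all_classical all_reals all_analysis.
From mathcomp Require Import ring lra.
Import Order.TTheory GRing.Theory Num.Theory.
Import numFieldNormedType.Exports.
Local Open Scope ring_scope.
Local Open Scope classical_set_scope.

Local Notation o1 := (@Ordinal 4 1 isT).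
Local Notation o2 := (@Ordinal 4 2 isT).
Local Notation o3 := (@Ordinal 4 3 isT).

Lemma ord4P (j : 'I_4) : [\/ j = ord0, j = o1, j = o2 | j = o3].
Proof.
by case: j => -[|[|[|[|//]]]] ?; [constructor 1|constructor 2|constructor 3|constructor 4];
  apply: val_inj.
Qed.

Lemma big_ord4 (R : nmodType) (F : 'I_4 -> R) :
  \sum_(j < 4) F j = F ord0 + F o1 + F o2 + F o3.
Proof.
rewrite !big_ord_recl big_ord0 addr0 !addrA.
by congr (_ + _ + _ + _); congr F; apply: val_inj.
Qed.

Section Orthogonal.
Context {R : nzRingType} {n : nat} {Q : 'M[R]_n}.
Hypothesis Q_ortho : Q *m Q^T = 1%:M.

Lemma orthogonal_row_neq0 i : exists j, Q i j != 0.
Proof.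
apply/existsP; rewrite -negb_forall; apply/negP => /forallP Qi0.
have := congr1 (fun A : 'M[R]_n => A i i) Q_ortho.
rewrite !mxE eqxx big1 => [/eqP|j _]; first by rewrite eq_sym oner_eq0.
by rewrite mxE (eqP (Qi0 j)) mul0r.
Qed.

Lemma orthogonal_col_eq0 i i' k :
  i' != i -> (forall j, j != k -> Q i j = 0) -> Q i' k = 0.
Proof.
move=> i'i Qi.
have dot_row i'' : (Q *m Q^T) i'' i = Q i'' k * Q i k.
  rewrite mxE (bigD1 k) //= big1 ?addr0 => [|j jk]; first by rewrite mxE.
  by rewrite mxE Qi // mulr0.
have := dot_row i'; have := dot_row i.
rewrite Q_ortho !mxE eqxx (negbTE i'i) mulr1n mulr0n.
by move=> /esym Qik2 /esym Qi'k; rewrite -[Q i' k]mulr1 -Qik2 mulrA Qi'k mul0r.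
Qed.

End Orthogonal.

Lemma row_perm_orthogonal (R : comNzRingType) n (s : 'S_n) (Q : 'M[R]_n) :
  Q *m Q^T = 1%:M -> row_perm s Q *m (row_perm s Q)^T = 1%:M.
Proof.
move=> Q_ortho; rewrite row_permE trmx_mul tr_perm_mx mulmxA -(mulmxA _ Q).
by rewrite Q_ortho mulmx1 -perm_mxM mulgV perm_mx1.
Qed.

Lemma mulmx_trmx_orthogonal (R : comUnitRingType) n (Y B : 'M[R]_n) :
  Y *m Y^T = 1%:M -> B *m B^T = 1%:M -> (Y *m B^T) *m (Y *m B^T)^T = 1%:M.
Proof.
move=> Y_ortho /mulmx1C BtB.
by rewrite trmx_mul trmxK mulmxA -(mulmxA Y) BtB mulmx1.
Qed.

Section SharedRow.
Context {R : nzRingType} {n : nat} {Y B : 'M[R]_n} {i0 : 'I_n}.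
Hypothesis YB_row : forall j, Y i0 j = B i0 j.

Lemma mulmx_trmx_col_shared i : Y *m Y^T = 1%:M -> (Y *m B^T) i i0 = (i == i0)%:R.
Proof.
move=> Y_ortho.
have := congr1 (fun A : 'M[R]_n => A i i0) Y_ortho; rewrite !mxE => <-.
by apply: eq_bigr => j _; rewrite !mxE YB_row.
Qed.

Lemma mulmx_trmx_row_shared k : B *m B^T = 1%:M -> (Y *m B^T) i0 k = (i0 == k)%:R.
Proof.
move=> B_ortho.
have := congr1 (fun A : 'M[R]_n => A i0 k) B_ortho; rewrite !mxE => <-.
by apply: eq_bigr => j _; rewrite !mxE YB_row.
Qed.

End SharedRow.

Section RealCalculus.
Context {R : realType}.

Lemma is_derive_unique {f : R -> R} {t d d' : R} :
  is_derive t (1 : R) f d -> is_derive t (1 : R) f d' -> d = d'.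
Proof.
by move=> fd fd'; rewrite -(@derive_val _ _ _ _ _ _ _ fd) (@derive_val _ _ _ _ _ _ _ fd').
Qed.

Lemma is_derive_continuous {f : R -> R} {df : R -> R} :
  (forall t, is_derive t (1 : R) f (df t)) -> continuous f.
Proof.
move=> fd t; apply/differentiable_continuous/derivable1_diffP.
exact: @ex_derive _ _ _ _ _ _ _ (fd t).
Qed.

Lemma continuous_itvoo_eq0 {f : R -> R} {l u : R} : l < u -> continuous f ->
  (forall t, l < t < u -> f t = 0) -> f l = 0 /\ f u = 0.
Proof.
move=> lu f_cont f0; split.
- have f_l : f x @[x --> l^'+] --> f l by exact/cvg_at_right_filter/f_cont.
  have f_l0 : f x @[x --> l^'+] --> 0.
    apply: cvg_near_cst; near=> x; apply: f0.
    by apply/andP; split; near: x; [exact: nbhs_right_gt | exact: nbhs_right_lt].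
  exact: cvg_unique f_l f_l0.
- have f_u : f x @[x --> u^'-] --> f u by exact/cvg_at_left_filter/f_cont.
  have f_u0 : f x @[x --> u^'-] --> 0.
    apply: cvg_near_cst; near=> x; apply: f0.
    by apply/andP; split; near: x; [exact: nbhs_left_gt | exact: nbhs_left_lt].
  exact: cvg_unique f_u f_u0.
Unshelve. all: by end_near.
Qed.

Lemma is_derive_mulmx_trmx n (U V : R -> 'M[R]_n) (dU dV : 'M[R]_n) (t : R) :
  (forall i j, is_derive t 1 (fun s => U s i j) (dU i j)) ->
  (forall i j, is_derive t 1 (fun s => V s i j) (dV i j)) ->
  forall i k, is_derive t 1 (fun s => (U s *m (V s)^T) i k)
                            ((dU *m (V t)^T + U t *m dV^T) i k).
Proof.
move=> U_der V_der i k.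
have -> : (fun s => (U s *m (V s)^T) i k) =
          \sum_(j < n) ((fun s => U s i j) * (fun s => V s k j)).
  by apply/funext => s; rewrite fct_sumE !mxE; apply: eq_bigr => j _; rewrite !mxE.
apply: is_derive_eq; rewrite !mxE -big_split /=; apply: eq_bigr => j _.
by rewrite !mxE /= addrC; congr (_ + _); exact: mulrC.
Qed.

End RealCalculus.

Lemma coeff_matrix_mulmx_trmx (R : realType) (Y B X W : R -> 'M[R]_4) :
  coeff_matrix Y X -> coeff_matrix B W ->
  forall (t : R) i k, is_derive t (1 : R) (fun s => (Y s *m (B s)^T) i k)
    ((X t *m (Y t *m (B t)^T) + (Y t *m (B t)^T) *m (W t)^T) i k).
Proof.
move=> YX BW t i k; apply: is_derive_eq.
  exact: is_derive_mulmx_trmx (YX t) (BW t) i k.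
by rewrite trmx_mul !mulmxA.
Qed.

Section FrameEquations.
Variables (R : realType) (Q : 'M[R]_4).

Lemma mulmx_typeC_row2 y1 y2 y3 k : (typeC_mx y1 y2 y3 *m Q) o2 k = - y2 * Q ord0 k.
Proof. by rewrite !mxE big_ord4 !mxE /=; ring. Qed.

Lemma mulmx_typeC_row3 y1 y2 y3 k : (typeC_mx y1 y2 y3 *m Q) o3 k = - y3 * Q o1 k.
Proof. by rewrite !mxE big_ord4 !mxE /=; ring. Qed.

Lemma mulmx_bishop_tr_col0 a b c i :
  (Q *m (bishop_mx a b c)^T) i ord0 = a * Q i o1 + b * Q i o2 + c * Q i o3.
Proof. by rewrite !mxE big_ord4 !mxE /=; ring. Qed.

Lemma mulmx_bishop_tr_col a b c i k : k != ord0 ->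
  (Q *m (bishop_mx a b c)^T) i k = Q i ord0 * bishop_mx a b c k ord0.
Proof.
by case/ord4P: (k) => -> // _; rewrite !mxE big_ord4 !mxE /=; ring.
Qed.

End FrameEquations.

Section BumpSupports.
Context {R : realType}.
Implicit Type t : R.

Lemma b1_gt0 t : t < 0 \/ 2 < t -> 0 < b1 t.
Proof. by rewrite /b1; case: ifP => [|t_ge0 [//|->]]; rewrite expR_gt0. Qed.

Lemma b1_eq0 t : 0 <= t <= 2 -> b1 t = 0.
Proof. by case/andP=> t_ge0 t_le2; rewrite /b1 !ltNge t_ge0 t_le2. Qed.

Lemma b2_gt0 t : 0 < t < 1 -> 0 < b2 t.
Proof. by rewrite /b2 => ->; rewrite expR_gt0. Qed.

Lemma b2_eq0 t : t <= 0 \/ 1 <= t -> b2 t = 0.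
Proof. by rewrite /b2 !ltNge => -[] ->; rewrite ?andbF. Qed.

Lemma b3_gt0 t : 1 < t < 2 -> 0 < b3 t.
Proof. by rewrite /b3 => ->; rewrite expR_gt0. Qed.

Lemma b3_eq0 t : t <= 1 \/ 2 <= t -> b3 t = 0.
Proof. by rewrite /b3 !ltNge => -[] ->; rewrite ?andbF. Qed.

End BumpSupports.

Section TypeCBishopTransition.
Variables (R : realType) (x1 x2 x3 : R -> R) (P : R -> 'M[R]_4).
Hypothesis P_ortho : forall t, P t *m (P t)^T = 1%:M.
Hypothesis P_col0 : forall t i, P t i ord0 = (i == ord0)%:R.
Hypothesis P_row0 : forall t k, P t ord0 k = (ord0 == k)%:R.
Hypothesis P_ode : forall (t : R) i k, is_derive t (1 : R) (fun s => P s i k)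
  ((typeC_mx (x1 t) (x2 t) (x3 t) *m P t + P t *m (bishop_mx (b1 t) (b2 t) (b3 t))^T) i k).

Lemma transition_continuous i k : continuous (fun s => P s i k).
Proof. exact: is_derive_continuous (fun t => P_ode t i k). Qed.

Lemma transition_row2_cst k t : k != ord0 -> P t o2 k = P 0 o2 k.
Proof.
move=> k0; apply: (@is_derive_0_is_cst _ (fun s => P s o2 k)) => s.
apply: is_derive_eq.
rewrite mxE mulmx_typeC_row2 mulmx_bishop_tr_col // P_col0 P_row0.
by rewrite eq_sym (negbTE k0) !mul0r mulr0 addr0.
Qed.

Lemma transition_row3_bishop t :
  b1 t * P t o3 o1 + b2 t * P t o3 o2 + b3 t * P t o3 o3 = 0.
Proof.
have P30_der : is_derive t (1 : R) (fun s => P s o3 ord0) 0.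
  have -> : (fun s => P s o3 ord0) = cst 0 by apply/funext => s; rewrite P_col0.
  exact: is_derive_cst.
have := is_derive_unique (P_ode t o3 ord0) P30_der.
by rewrite mxE mulmx_typeC_row3 mulmx_bishop_tr_col0 P_col0 mulr0 add0r.
Qed.

Lemma transition_row3_single {k : 'I_4} {bk : R -> R} {t : R} : 0 < bk t ->
  b1 t * P t o3 o1 + b2 t * P t o3 o2 + b3 t * P t o3 o3 = bk t * P t o3 k ->
  P t o3 k = 0.
Proof.
move=> bk_gt0; rewrite transition_row3_bishop => /esym/eqP.
by rewrite mulf_eq0 gt_eqF // => /eqP.
Qed.

Lemma transition_row3_col1 : P 0 o3 o1 = 0 /\ P 2 o3 o1 = 0.
Proof.
have P31 t : t < 0 \/ 2 < t -> P t o3 o1 = 0.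
  move=> t_out; apply: (transition_row3_single (b1_gt0 t t_out)).
  by rewrite b2_eq0 ?b3_eq0; [rewrite !mul0r !addr0 | lra | lra].
have [_ P031] := continuous_itvoo_eq0 (ltrN10 R) (transition_continuous o3 o1)
  (fun t t_in => P31 t (or_introl (andP t_in).2)).
have lt23 : (2 : R) < 3 by lra.
have [P231 _] := continuous_itvoo_eq0 lt23 (transition_continuous o3 o1)
  (fun t t_in => P31 t (or_intror (andP t_in).1)).
by split.
Qed.

Lemma transition_row3_col2 : P 0 o3 o2 = 0 /\ P 1 o3 o2 = 0.
Proof.
apply: continuous_itvoo_eq0 ltr01 (transition_continuous o3 o2) _ => t t01.
apply: (transition_row3_single (b2_gt0 t t01)).
by rewrite b1_eq0 ?b3_eq0; [rewrite !mul0r add0r addr0 | lra | lra].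
Qed.

Lemma transition_row3_col3 : P 1 o3 o3 = 0 /\ P 2 o3 o3 = 0.
Proof.
have lt12 : (1 : R) < 2 by lra.
apply: continuous_itvoo_eq0 lt12 (transition_continuous o3 o3) _ => t t12.
apply: (transition_row3_single (b3_gt0 t t12)).
by rewrite b1_eq0 ?b2_eq0; [rewrite !mul0r !add0r | lra | lra].
Qed.

Lemma no_typeC_bishop_transition : False.
Proof.
have [P031 P231] := transition_row3_col1.
have [P032 P132] := transition_row3_col2.
have [P133 P233] := transition_row3_col3.
have row2_eq0 t k : (forall j, j != k -> P t o3 j = 0) -> P t o2 k = 0.
  exact: orthogonal_col_eq0 (P_ortho t) o3 o2 k isT.
have P021 : P 0 o2 o1 = 0.
  rewrite -(transition_row2_cst o1 1) //; apply: row2_eq0 => j.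
  by case/ord4P: (j) => -> // _; rewrite P_col0.
have P022 : P 0 o2 o2 = 0.
  rewrite -(transition_row2_cst o2 2) //; apply: row2_eq0 => j.
  by case/ord4P: (j) => -> // _; rewrite P_col0.
have P023 : P 0 o2 o3 = 0.
  by apply: row2_eq0 => j; case/ord4P: (j) => -> // _; rewrite P_col0.
have [j] := orthogonal_row_neq0 (P_ortho 0) o2.
by case/ord4P: (j) => ->; rewrite ?P_col0 ?P021 ?P022 ?P023 eqxx.
Qed.

End TypeCBishopTransition.

Theorem proposition4 (R : realType) (gamma : R -> 'rV[R]_4) (B : R -> 'M[R]_4) :
  smooth_curve gamma ->
  is_frame gamma B ->
  coeff_matrix B (fun t => bishop_mx (b1 t) (b2 t) (b3 t)) ->
  regular_curve gamma /\ ~ (exists Z : R -> 'M[R]_4, is_frame gamma Z /\ type_C Z).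
Proof.
move=> gamma_smooth [_ [B_ortho B_tangent]] B_coef; split.
  split=> // t; have [j B0j] := orthogonal_row_neq0 (B_ortho t) ord0.
  by exists j; rewrite derive1E (@derive_val _ _ _ _ _ _ _ (B_tangent t j)).
move=> [Z [[_ [Z_ortho Z_tangent]] [s [s0 [x1 [x2 [x3 [_ _ _ Y_coef]]]]]]]].
set Y := permute_frame s Z in Y_coef.
have Y_ortho t : Y t *m (Y t)^T = 1%:M.
  have -> : Y t = row_perm s (Z t) by apply/matrixP => i j; rewrite !mxE.
  exact: row_perm_orthogonal.
have YB_row t j : Y t ord0 j = B t ord0 j.
  rewrite /Y /permute_frame mxE s0.
  exact: is_derive_unique (Z_tangent t j) (B_tangent t j).
apply: (@no_typeC_bishop_transition R x1 x2 x3 (fun t => Y t *m (B t)^T)).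
- by move=> t; exact: mulmx_trmx_orthogonal.
- by move=> t i; exact: mulmx_trmx_col_shared.
- by move=> t k; exact: mulmx_trmx_row_shared.
- exact: coeff_matrix_mulmx_trmx Y_coef B_coef.
Qed.
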